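(* Assume $a>2b$. For every self-intersected 6-periodic of type I in the elliptic billiard, the angles $\theta_i'$ between consecutive sides of its outer polygon satisfy $$\sum_{i=1}^6\cos(2\theta_i')=-\frac{2(a^2-4ab+b^2)}{(a-b)^2}=JL-6.$$
   Context: The elliptic billiard is $\mathcal{E}: x^2/a^2+y^2/b^2=1$, $a>b>0$, $c=\sqrt{a^2-b^2}$. An $N$-periodic is a closed billiard trajectory $P_1\dots P_N$ on $\mathcal{E}$ (at each vertex the normal to $\mathcal{E}$ bisects the angle between the incident segments); all segments are tangent to a fixed confocal conic (the caustic), and all closed trajectories tangent to a given caustic form a one-parameter family. Type I self-intersected 6-periodics (existing for $a>2b$) are the 6-periodics tangent to the confocal hyperbola $x^2/a''^2-y^2/b''^2=1$ with $a''=\frac{a^{3/2}\sqrt{a-2b}}{a-b}$, $b''=\frac{b^{3/2}\sqrt{2a-b}}{a-b}$; one member is $P_1=(0,b)$, $P_2=(k_x,k_y)$, $P_3=(k_x,-k_y)$, $P_4=(0,-b)$, $P_5=-P_2$, $P_6=-P_3$ with $k_x=\frac{a\sqrt{a(a-2b)}}{b-a}$, $k_y=\frac{b^2}{b-a}$. The outer polygon has vertices $P_i'$ = intersection of the tangent lines to $\mathcal{E}$ at $P_i$ and $P_{i+1}$; $\theta_i'$ is the angle at $P_i'$ between these two lines (the value of $\cos 2\theta_i'$ does not depend on which of the supplementary angles is chosen). $L=\frac{4(a^2-ab+b^2)}{a-b}$ is the common perimeter and $J=\frac12\nabla f(P_i)\cdot\hat v>0$ is Joachimsthal's constant ($f=x^2/a^2+y^2/b^2$),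 here $J=1/(a-b)$. *)

From Stdlib Require Import Reals Lra Lia.
Open Scope R_scope.

Definition pt := (R * R)%type.

Definition dot (u v : pt) : R := fst u * fst v + snd u * snd v.
Definition cross (u v : pt) : R := fst u * snd v - snd u * fst v.
Definition vsub (u v : pt) : pt := (fst u - fst v, snd u - snd v).
Definition vnorm (u : pt) : R := sqrt (dot u u).

Definition on_ellipse (a b : R) (p : pt) : Prop :=
  (fst p)^2 / a^2 + (snd p)^2 / b^2 = 1.

Definition grad_f (a b : R) (p : pt) : pt := (2 * fst p / a^2, 2 * snd p / b^2).

Definition ell_tangent (a b : R) (p : pt) : pt := (- snd p / b^2, fst p / a^2).

Definition vtx (P : nat -> pt) (i : nat) : pt := P (i mod 6)%nat.

(* Billiard reflection at vertex i: the normal to the ellipse bisects the angle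
   between the incident segments, i.e. the sum of the unit vectors from P_i
   towards P_{i-1} and towards P_{i+1} is parallel to the normal. *)
Definition reflects (a b : R) (P : nat -> pt) (i : nat) : Prop :=
  let p := vtx P i in
  let u := vsub (vtx P (i + 5)) p in
  let w := vsub (vtx P (i + 1)) p in
  cross (fst u / vnorm u + fst w / vnorm w, snd u / vnorm u + snd w / vnorm w)
        (grad_f a b p) = 0.

(* the line through p q (p <> q) is tangent to the hyperbola
   x^2/A^2 - y^2/B^2 = 1: it touches the hyperbola at some point X, with
   direction q - p orthogonal to the hyperbola's normal at X *)
Definition tangent_to_hyperbola (A B : R) (p q : pt) : Prop :=
  exists X : pt,
    (fst X)^2 / A^2 - (snd X)^2 / B^2 = 1 /\
    cross (vsub q p) (vsub X p) = 0 /\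
    dot (vsub q p) (fst X / A^2, - snd X / B^2) = 0.

(* the caustic of type I self-intersected 6-periodics *)
Definition a2 (a b : R) : R := a * sqrt a * sqrt (a - 2 * b) / (a - b).
Definition b2 (a b : R) : R := b * sqrt b * sqrt (2 * a - b) / (a - b).

Definition periodic6 (a b : R) (P : nat -> pt) : Prop :=
  (forall i, (i < 6)%nat -> on_ellipse a b (P i)) /\
  (forall i, (i < 6)%nat -> vtx P i <> vtx P (i + 1)) /\
  (forall i, (i < 6)%nat -> reflects a b P i).

Definition typeI_6periodic (a b : R) (P : nat -> pt) : Prop :=
  periodic6 a b P /\
  (forall i, (i < 6)%nat ->
     tangent_to_hyperbola (a2 a b) (b2 a b) (vtx P i) (vtx P (i + 1))).

(* angle (in [0, pi/2]) between two lines with direction vectors u, v *)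
Definition line_angle (u v : pt) : R :=
  acos (Rabs (dot u v) / (vnorm u * vnorm v)).

(* theta_i' : angle at the outer-polygon vertex P_i' between the tangent lines
   to the ellipse at P_i and P_{i+1} *)
Definition outer_angle (a b : R) (P : nat -> pt) (i : nat) : R :=
  line_angle (ell_tangent a b (vtx P i)) (ell_tangent a b (vtx P (i + 1))).

Definition perimeter6 (P : nat -> pt) : R :=
  sum_f_R0 (fun i => vnorm (vsub (vtx P (i + 1)) (vtx P i))) 5.

Definition joachimsthal (a b : R) (P : nat -> pt) : R :=
  let v := vsub (vtx P 0) (vtx P 5) in
  / 2 * dot (grad_f a b (vtx P 0)) (fst v / vnorm v, snd v / vnorm v).

From Stdlib Require Import Reals Lra Lia.
Open Scope R_scope.

(* A chord P P' of the ellipse is tangent to the type I caustic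
   iff its endpoints satisfy the "caustic relation" x x'/a^3 - y y'/b^3 = 1/(a-b):
   its line n.Z = 1 lies on the dual hyperbola a''^2 n1^2 - b''^2 n2^2 = 1, and
   Vieta on the ellipse expresses x x', y y' through n.  Along such a chord, with
   c = a/(2(a-b)) - (a+b) x x'/(2a^3), the tangents at P, P' satisfy
   cos 2θ' = 2c - 1, the length is 2(a-b)c and Joachimsthal's constant is
   1/(a-b); hence J L - 6 = Σ cos 2θ'_i, and the closed form reduces to
   Σ x_i x_{i+1} = 2a^3(a-2b)/(a-b)^2.  This follows by summing around the
   hexagon a neighbour formula x_{i-1} + x_{i+1} = F(P_i) (both caustic partners
   of P_i lie on one line, or coincide and then the reflection law makes the
   chord normal) and an edge identity x F(P) + x' F(P') - x x' = a^3(a-2b)/(a-b)^2.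
   The file proves planar facts, chord facts for the ellipse, caustic-chord
   facts, the cyclic bookkeeping, and finally the theorem. *)

Lemma sq_pos (x : R) : x <> 0 -> 0 < x ^ 2.
Proof. intros Hx. pose proof (Rsqr_pos_lt x Hx). unfold Rsqr in *. lra. Qed.

Lemma pair_neq_coord (x y x' y' : R) :
  (x, y) <> (x', y') -> x - x' <> 0 \/ y - y' <> 0.
Proof.
  intros Hne. destruct (Req_dec x x'), (Req_dec y y'); try (left; lra); try (right; lra).
  subst. contradiction.
Qed.

Lemma weighted_sq_pos (al be u v : R) :
  0 < al -> 0 < be -> u <> 0 \/ v <> 0 -> 0 < al * u^2 + be * v^2.
Proof.
  intros Hal Hbe [H | H]; pose proof (sq_pos _ H);
    pose proof (pow2_ge_0 u); pose proof (pow2_ge_0 v); nra.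
Qed.

Lemma cos2_line_angle (u v : pt) : 0 < dot u u -> 0 < dot v v ->
  cos (2 * line_angle u v) = 2 * ((dot u v)^2 / (dot u u * dot v v)) - 1.
Proof.
  intros Hu Hv. unfold line_angle, vnorm.
  set (d := dot u v). set (s := sqrt (dot u u) * sqrt (dot v v)).
  assert (Hs2 : s ^ 2 = dot u u * dot v v)
    by (unfold s; rewrite Rpow_mult_distr, !pow2_sqrt; lra).
  assert (Hs : 0 < s) by (unfold s; apply Rmult_lt_0_compat; apply sqrt_lt_R0; lra).
  assert (Hk2 : (Rabs d / s) ^ 2 = d ^ 2 / (dot u u * dot v v))
    by (rewrite <- Hs2, <- (pow2_abs d); field; lra).
  (* Cauchy-Schwarz, via Lagrange's identity *)
  assert (CS : d ^ 2 <= s ^ 2).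
  { rewrite Hs2. unfold d, dot. destruct u as [u1 u2], v as [v1 v2]; simpl.
    assert (0 <= (u1 * v2 - u2 * v1) ^ 2) by apply pow2_ge_0. nra. }
  assert (Hd : Rabs d <= s) by (rewrite <- (pow2_abs d) in CS; pose proof (Rabs_pos d); nra).
  assert (Hk : 0 <= Rabs d / s <= 1).
  { split; [apply Rmult_le_pos; [apply Rabs_pos | left; apply Rinv_0_lt_compat; lra]|].
    apply (Rmult_le_reg_r s); [lra|]. unfold Rdiv. rewrite Rmult_assoc, Rinv_l, Rmult_1_r; lra. }
  rewrite cos_2a_cos, cos_acos by lra. rewrite <- Hk2. ring.
Qed.

Lemma perp_common_parallel (d1 d2 u1 u2 v1 v2 : R) :
  d1 <> 0 \/ d2 <> 0 -> d1 * u1 + d2 * u2 = 0 -> d1 * v1 + d2 * v2 = 0 ->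
  u1 * v2 - u2 * v1 = 0.
Proof.
  intros Hd Hu Hv.
  assert (H1 : d1 * (u1 * v2 - u2 * v1) = 0).
  { replace (d1 * (u1 * v2 - u2 * v1)) with (v2 * (d1 * u1) - u2 * (d1 * v1)) by ring.
    replace (d1 * u1) with (- (d2 * u2)) by lra. replace (d1 * v1) with (- (d2 * v2)) by lra.
    ring. }
  assert (H2 : d2 * (u1 * v2 - u2 * v1) = 0).
  { replace (d2 * (u1 * v2 - u2 * v1)) with (u1 * (d2 * v2) - v1 * (d2 * u2)) by ring.
    replace (d2 * u2) with (- (d1 * u1)) by lra. replace (d2 * v2) with (- (d1 * v1)) by lra.
    ring. }
  destruct Hd as [Hd | Hd];
    [ destruct (Rmult_integral _ _ H1) | destruct (Rmult_integral _ _ H2) ]; lra.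
Qed.

Lemma hyperbola_tangent_line (A B : R) (p q : pt) :
  A <> 0 -> B <> 0 -> p <> q -> tangent_to_hyperbola A B p q ->
  exists n1 n2, A^2*n1^2 - B^2*n2^2 = 1 /\
    n1 * fst p + n2 * snd p = 1 /\ n1 * fst q + n2 * snd q = 1.
Proof.
  destruct p as [x y], q as [x' y']. intros HA HB Hne [[X1 X2] [Hh [Hc Hd]]].
  unfold cross, dot, vsub in Hc, Hd; cbn [fst snd] in *.
  exists (X1/A^2), (-X2/B^2).
  (* n = (X1/A^2, -X2/B^2) is orthogonal to q - p, which is parallel to X - p *)
  assert (Hw : X1/A^2 * (-(X1-x)) - (-X2/B^2) * (X2-y) = 0).
  { apply (perp_common_parallel (x'-x) (y'-y)); [now apply pair_neq_coord | lra | lra]. }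
  assert (HX : X1/A^2*X1 + (-X2/B^2)*X2 = 1) by (rewrite <- Hh; field; auto).
  repeat split.
  - rewrite <- Hh. field. auto.
  - lra.
  - lra.
Qed.

Definition bisects (a b : R) (z p w : pt) : Prop :=
  let u := vsub z p in
  let v := vsub w p in
  cross (fst u / vnorm u + fst v / vnorm v, snd u / vnorm u + snd v / vnorm v)
        (grad_f a b p) = 0.

Section EllipseChords.
Variables a b : R.
Hypotheses (Ha : 0 < a) (Hb : 0 < b).

Lemma secant_midpoint (n1 n2 x y x' y' : R) :
  x^2/a^2 + y^2/b^2 = 1 -> x'^2/a^2 + y'^2/b^2 = 1 -> (x, y) <> (x', y') ->
  n1*x + n2*y = 1 -> n1*x' + n2*y' = 1 ->
  (x+x')*(a^2*n1^2+b^2*n2^2) = 2*a^2*n1 /\ (y+y')*(a^2*n1^2+b^2*n2^2) = 2*b^2*n2.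
Proof.
  intros E1 E2 Hne L1 L2.
  assert (Hpar : n1 * ((y+y')/b^2) - n2 * ((x+x')/a^2) = 0).
  { apply (perp_common_parallel (x - x') (y - y')); [now apply pair_neq_coord | lra |].
    transitivity ((x^2/a^2 + y^2/b^2) - (x'^2/a^2 + y'^2/b^2)); [field; lra | lra]. }
  assert (HS : n1*(x+x') + n2*(y+y') = 2) by lra.
  split.
  - transitivity (a^2*n1*(n1*(x+x') + n2*(y+y')) - a^2*b^2*n2*(n1 * ((y+y')/b^2) - n2 * ((x+x')/a^2)));
      [field; lra | rewrite HS, Hpar; ring].
  - transitivity (b^2*n2*(n1*(x+x') + n2*(y+y')) + a^2*b^2*n1*(n1 * ((y+y')/b^2) - n2 * ((x+x')/a^2)));
      [field; lra | rewrite HS, Hpar; ring].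
Qed.

(* Vieta: the products x x', y y' of the endpoints of the chord on n.Z = 1. *)
Lemma secant_products (n1 n2 x y x' y' : R) :
  x^2/a^2 + y^2/b^2 = 1 -> n1*x + n2*y = 1 ->
  (x+x')*(a^2*n1^2+b^2*n2^2) = 2*a^2*n1 -> (y+y')*(a^2*n1^2+b^2*n2^2) = 2*b^2*n2 ->
  x*x'*(a^2*n1^2+b^2*n2^2) = a^2*(1-b^2*n2^2) /\ y*y'*(a^2*n1^2+b^2*n2^2) = b^2*(1-a^2*n1^2).
Proof.
  intros E L M1 M2.
  (* x and y are roots of the quadratics obtained by eliminating the other coordinate *)
  assert (Qx : (a^2*n1^2+b^2*n2^2)*x^2 - 2*a^2*n1*x + a^2*(1-b^2*n2^2) = 0).
  { transitivity (a^2*b^2*n2^2*(x^2/a^2+y^2/b^2-1) - a^2*(n1*x+n2*y-1)*(n2*y+1-n1*x));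
      [field; lra | rewrite E, L; ring]. }
  assert (Qy : (a^2*n1^2+b^2*n2^2)*y^2 - 2*b^2*n2*y + b^2*(1-a^2*n1^2) = 0).
  { transitivity (a^2*b^2*n1^2*(x^2/a^2+y^2/b^2-1) - b^2*(n1*x+n2*y-1)*(n1*x+1-n2*y));
      [field; lra | rewrite E, L; ring]. }
  split.
  - transitivity (x*((x+x')*(a^2*n1^2+b^2*n2^2)) - (a^2*n1^2+b^2*n2^2)*x^2); [ring | rewrite M1; lra].
  - transitivity (y*((y+y')*(a^2*n1^2+b^2*n2^2)) - (a^2*n1^2+b^2*n2^2)*y^2); [ring | rewrite M2; lra].
Qed.

Lemma ellipse_normal_sq_pos (x y : R) :
  x^2/a^2 + y^2/b^2 = 1 -> 0 < x^2/a^4 + y^2/b^4.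
Proof.
  intros E.
  assert (Hxy : x <> 0 \/ y <> 0).
  { destruct (Req_dec x 0) as [->|]; [right; intros ->|left; assumption].
    replace (0^2/a^2 + 0^2/b^2) with 0 in E by (field; lra). lra. }
  pose proof (weighted_sq_pos (/ a^4) (/ b^4) x y) as H.
  assert (0 < /a^4) by (apply Rinv_0_lt_compat, pow_lt; lra).
  assert (0 < /b^4) by (apply Rinv_0_lt_compat, pow_lt; lra).
  unfold Rdiv. lra.
Qed.

Lemma normal_chord (x y wx wy : R) :
  x^2/a^2 + y^2/b^2 = 1 -> wx^2/a^2 + wy^2/b^2 = 1 -> (x, y) <> (wx, wy) ->
  (wx-x)*(y/b^2) - (wy-y)*(x/a^2) = 0 ->
  exists s, s <> 0 /\ wx = x*(1 + s/a^2) /\ wy = y*(1 + s/b^2) /\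
    2*(x^2/a^4 + y^2/b^4) + s*(x^2/a^6 + y^2/b^6) = 0.
Proof.
  intros E Ew Hne Hc.
  pose proof (ellipse_normal_sq_pos x y E) as HD.
  set (D := x^2/a^4 + y^2/b^4) in *.
  set (S := (wx-x)*(x/a^2) + (wy-y)*(y/b^2)).
  (* decompose w - p along the normal (x/a^2, y/b^2) and its orthogonal *)
  assert (Hd1 : (wx-x)*D = (x/a^2)*S + (y/b^2)*((wx-x)*(y/b^2) - (wy-y)*(x/a^2)))
    by (unfold D, S; field; lra).
  assert (Hd2 : (wy-y)*D = (y/b^2)*S - (x/a^2)*((wx-x)*(y/b^2) - (wy-y)*(x/a^2)))
    by (unfold D, S; field; lra).
  rewrite Hc in Hd1, Hd2.
  exists (S / D).
  assert (Hwx : wx = x*(1 + S/D/a^2)).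
  { apply (Rmult_eq_reg_r D); [|lra].
    transitivity (x*D + (wx-x)*D); [ring|]. rewrite Hd1. field. lra. }
  assert (Hwy : wy = y*(1 + S/D/b^2)).
  { apply (Rmult_eq_reg_r D); [|lra].
    transitivity (y*D + (wy-y)*D); [ring|]. rewrite Hd2. field. lra. }
  clearbody S. set (s := S / D) in *. clearbody s.
  assert (Hs : s <> 0).
  { intros ->. apply Hne. rewrite Hwx, Hwy. f_equal; field; lra. }
  repeat split; try assumption.
  assert (Hq : s * (2*D + s*(x^2/a^6 + y^2/b^6)) = 0).
  { transitivity ((wx^2/a^2 + wy^2/b^2) - (x^2/a^2 + y^2/b^2)); [|rewrite E, Ew; ring].
    rewrite Hwx, Hwy. unfold D. field. lra. }
  destruct (Rmult_integral _ _ Hq); [contradiction | assumption].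
Qed.

(* A 2-periodic bounce p -> w -> p obeys the reflection law at p only along the normal. *)
Lemma bisects_degenerate (x y wx wy : R) :
  (x, y) <> (wx, wy) -> bisects a b (wx, wy) (x, y) (wx, wy) ->
  (wx-x)*(y/b^2) - (wy-y)*(x/a^2) = 0.
Proof.
  intros Hne. unfold bisects, cross, vsub, grad_f; cbn [fst snd].
  set (n := vnorm (wx - x, wy - y)).
  assert (Hn : 0 < n).
  { unfold n, vnorm, dot; cbn [fst snd]. apply sqrt_lt_R0.
    destruct (pair_neq_coord _ _ _ _ Hne) as [Hd|Hd]; pose proof (sq_pos _ Hd);
      pose proof (pow2_ge_0 (wx-x)); pose proof (pow2_ge_0 (wy-y)); nra. }
  clearbody n. intros Hr.
  apply (Rmult_eq_reg_l (4/n)); [|apply Rgt_not_eq, Rdiv_lt_0_compat; lra].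
  rewrite Rmult_0_r, <- Hr. field. repeat split; lra.
Qed.
End EllipseChords.

(* The bilinear relation between the endpoints p, q of a chord tangent to the
   caustic of type I 6-periodics. *)
Definition caustic_pair (a b : R) (p q : pt) : Prop :=
  fst p * fst q / a^3 - snd p * snd q / b^3 = 1 / (a - b).

(* The parameter c of a caustic chord: cos^2 of the angle between the tangents
   at its endpoints, and its length divided by 2(a-b). *)
Definition chord_param (a b : R) (p q : pt) : R :=
  a / (2 * (a - b)) - (a + b) / (2 * a^3) * (fst p * fst q).

(* The sum of the abscissae of the two neighbours of a vertex p of a type I
   6-periodic. *)
Definition nbr_abscissa_sum (a b : R) (p : pt) : R :=
  2 * fst p / ((a - b) * a * (fst p ^ 2 / a^4 + snd p ^ 2 / b^4)).

Section Caustic.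
Variables a b : R.
Hypotheses (Hb : 0 < b) (Hab : 2 * b < a).

Let Ha : 0 < a. Proof. lra. Qed.

Lemma caustic_axes_sq :
  a2 a b ^ 2 = a^3 * (a - 2*b) / (a - b)^2 /\ b2 a b ^ 2 = b^3 * (2*a - b) / (a - b)^2.
Proof.
  unfold a2, b2, Rdiv. rewrite !Rpow_mult_distr, !pow_inv, !pow2_sqrt by lra.
  split; field; lra.
Qed.

Lemma caustic_axes_nonzero : a2 a b <> 0 /\ b2 a b <> 0.
Proof.
  destruct caustic_axes_sq as [HA HB].
  assert (0 < (a - b)^2) by (apply pow_lt; lra).
  assert (0 < a^3 * (a - 2*b) / (a - b)^2)
    by (apply Rdiv_lt_0_compat; [apply Rmult_lt_0_compat; [apply pow_lt|]|]; lra).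
  assert (0 < b^3 * (2*a - b) / (a - b)^2)
    by (apply Rdiv_lt_0_compat; [apply Rmult_lt_0_compat; [apply pow_lt|]|]; lra).
  split; intros Z; [rewrite Z in HA | rewrite Z in HB]; lra.
Qed.

Lemma secant_caustic_pair (n1 n2 x y x' y' : R) :
  x^2/a^2 + y^2/b^2 = 1 -> x'^2/a^2 + y'^2/b^2 = 1 -> (x, y) <> (x', y') ->
  a2 a b ^ 2 * n1^2 - b2 a b ^ 2 * n2^2 = 1 ->
  n1*x + n2*y = 1 -> n1*x' + n2*y' = 1 ->
  caustic_pair a b (x, y) (x', y').
Proof.
  intros E1 E2 Hne Hdual L1 L2. unfold caustic_pair; cbn [fst snd].
  destruct (secant_midpoint a b Ha Hb n1 n2 x y x' y' E1 E2 Hne L1 L2) as [M1 M2].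
  destruct (secant_products a b Ha Hb n1 n2 x y x' y' E1 L1 M1 M2) as [P1 P2].
  set (D := a^2*n1^2 + b^2*n2^2) in *.
  assert (HD : 0 < D).
  { apply weighted_sq_pos; try (apply pow_lt; lra).
    destruct (Req_dec n1 0); [right; intros ->|left]; [rewrite H in L1; lra | assumption]. }
  assert (Key : (1 - b^2*n2^2)/a - (1 - a^2*n1^2)/b = D/(a-b)).
  { destruct caustic_axes_sq as [HA HB]. rewrite HA, HB in Hdual.
    transitivity (D/(a-b) + (a-b)/(a*b) * (a^3*(a-2*b)/(a-b)^2*n1^2 - b^3*(2*a-b)/(a-b)^2*n2^2 - 1));
      [unfold D; field; lra | rewrite Hdual; ring]. }
  apply (Rmult_eq_reg_r D); [|lra].
  transitivity (x*x'*D/a^3 - y*y'*D/b^3); [field; lra|].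
  rewrite P1, P2.
  transitivity ((1 - b^2*n2^2)/a - (1 - a^2*n1^2)/b); [field; lra|].
  rewrite Key. field. lra.
Qed.


Lemma tangent_caustic_pair (p q : pt) :
  on_ellipse a b p -> on_ellipse a b q -> p <> q ->
  tangent_to_hyperbola (a2 a b) (b2 a b) p q -> caustic_pair a b p q.
Proof.
  intros Ep Eq Hne Ht.
  destruct caustic_axes_nonzero as [HA HB].
  destruct (hyperbola_tangent_line _ _ p q HA HB Hne Ht) as [n1 [n2 [Hdual [L1 L2]]]].
  destruct p as [x y], q as [x' y']. unfold on_ellipse in *; cbn [fst snd] in *.
  exact (secant_caustic_pair n1 n2 x y x' y' Ep Eq Hne Hdual L1 L2).
Qed.

Lemma chord_identities (x y x' y' : R) :
  x^2/a^2 + y^2/b^2 = 1 -> x'^2/a^2 + y'^2/b^2 = 1 ->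
  caustic_pair a b (x, y) (x', y') ->
  let c := chord_param a b (x, y) (x', y') in
  1 - x*x'/a^2 - y*y'/b^2 = 2*c /\
  (x'-x)^2 + (y'-y)^2 = (2*(a-b)*c)^2 /\
  (x*x'/a^4 + y*y'/b^4)^2 = c * ((x^2/a^4 + y^2/b^4) * (x'^2/a^4 + y'^2/b^4)).
Proof.
  intros E1 E2 HB c. unfold caustic_pair in HB. unfold c, chord_param. cbn [fst snd] in *.
  assert (Hy : y^2 = b^2*(1 - x^2/a^2)) by (rewrite <- E1; field; lra).
  assert (Hy' : y'^2 = b^2*(1 - x'^2/a^2)) by (rewrite <- E2; field; lra).
  assert (Hz : y*y' = b^3*(x*x'/a^3 - 1/(a-b))) by (rewrite <- HB; field; lra).
  (* every symmetric quantity of the chord is a function of x x' alone *)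
  assert (Hs : x^2 + x'^2 = a^2*(1 + (x*x')^2/a^4 - (y*y')^2/b^4)).
  { replace ((y*y')^2) with (y^2*y'^2) by ring. rewrite Hy, Hy'. field; lra. }
  rewrite Hz in Hs. rewrite Hz.
  split; [|split].
  - field. lra.
  - transitivity ((x^2+x'^2)*(1 - b^2/a^2) + 2*b^2 - 2*(x*x') - 2*(y*y')).
    + transitivity (x^2+x'^2 - 2*(x*x') + (y^2+y'^2) - 2*(y*y')); [ring|].
      rewrite Hy, Hy'. field. lra.
    + rewrite Hs, Hz. field. lra.
  - assert (Hp : (x^2/a^4 + y^2/b^4) * (x'^2/a^4 + y'^2/b^4) =
        (1/b^2)^2 + (1/b^2)*(1/a^4 - 1/(a^2*b^2))*(x^2+x'^2)
        + (1/a^4 - 1/(a^2*b^2))^2*(x*x')^2).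
    { rewrite Hy, Hy'. field. lra. }
    rewrite Hp, Hs. field. lra.
Qed.

Lemma chord_length (p q : pt) :
  on_ellipse a b p -> on_ellipse a b q -> p <> q -> caustic_pair a b p q ->
  0 < chord_param a b p q /\ vnorm (vsub q p) = 2 * (a - b) * chord_param a b p q.
Proof.
  destruct p as [x y], q as [x' y']. unfold on_ellipse; cbn [fst snd].
  intros E1 E2 Hne HB.
  destruct (chord_identities x y x' y' E1 E2 HB) as [_ [Hlen Hcos]].
  set (c := chord_param a b (x, y) (x', y')) in *.
  (* c times a positive number is a square *)
  assert (Hc0 : 0 <= c).
  { assert (HP : 0 < (x^2/a^4 + y^2/b^4) * (x'^2/a^4 + y'^2/b^4))
      by (apply Rmult_lt_0_compat; apply (ellipse_normal_sq_pos a b Ha Hb); assumption).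
    pose proof (pow2_ge_0 (x*x'/a^4 + y*y'/b^4)). nra. }
  assert (Hc : 0 < c).
  { destruct Hc0 as [|Hc0]; [assumption|]. rewrite <- Hc0 in Hlen.
    pose proof (pow2_ge_0 (x'-x)). pose proof (pow2_ge_0 (y'-y)).
    destruct (pair_neq_coord _ _ _ _ Hne) as [Hd|Hd]; pose proof (sq_pos _ Hd); nra. }
  split; [exact Hc|].
  unfold vnorm, vsub, dot; cbn [fst snd].
  rewrite <- (sqrt_pow2 (2*(a-b)*c)) by nra. f_equal. rewrite <- Hlen. ring.
Qed.

Lemma chord_tangent_angle (p q : pt) :
  on_ellipse a b p -> on_ellipse a b q -> caustic_pair a b p q ->
  cos (2 * line_angle (ell_tangent a b p) (ell_tangent a b q)) = 2 * chord_param a b p q - 1.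
Proof.
  destruct p as [x y], q as [x' y']. unfold on_ellipse; cbn [fst snd].
  intros E1 E2 HB.
  destruct (chord_identities x y x' y' E1 E2 HB) as [_ [_ Hcos]].
  pose proof (ellipse_normal_sq_pos a b Ha Hb x y E1).
  pose proof (ellipse_normal_sq_pos a b Ha Hb x' y' E2).
  assert (Hdot : forall u v w z : R,
    dot (ell_tangent a b (u, v)) (ell_tangent a b (w, z)) = u*w/a^4 + v*z/b^4)
    by (intros; unfold dot, ell_tangent; cbn [fst snd]; field; lra).
  rewrite cos2_line_angle, !Hdot by (rewrite Hdot; lra).
  replace (x*x/a^4 + y*y/b^4) with (x^2/a^4 + y^2/b^4) by (field; lra).
  replace (x'*x'/a^4 + y'*y'/b^4) with (x'^2/a^4 + y'^2/b^4) by (field; lra).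
  set (P := x^2/a^4 + y^2/b^4) in *. set (P' := x'^2/a^4 + y'^2/b^4) in *.
  rewrite Hcos. field. split; lra.
Qed.

Lemma chord_joachimsthal (p q : pt) :
  on_ellipse a b p -> on_ellipse a b q -> p <> q -> caustic_pair a b p q ->
  let v := vsub q p in
  / 2 * dot (grad_f a b q) (fst v / vnorm v, snd v / vnorm v) = 1 / (a - b).
Proof.
  intros Ep Eq Hne HB v.
  destruct (chord_length p q Ep Eq Hne HB) as [Hc Hlen]. fold v in Hlen.
  destruct p as [x y], q as [x' y']. unfold on_ellipse in Ep, Eq; cbn [fst snd] in *.
  destruct (chord_identities x y x' y' Ep Eq HB) as [Hpolar _].
  rewrite Hlen. unfold v, dot, grad_f, vsub; cbn [fst snd].
  transitivity ((x'^2/a^2 + y'^2/b^2 - x*x'/a^2 - y*y'/b^2) / (2*(a-b)*chord_param a b (x, y) (x', y')));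
    [field; split; lra|].
  rewrite Eq, Hpolar. field. lra.
Qed.

(* If z, w are both caustic partners of p, they lie on the line
   (a-b)(x/a^3) X - (a-b)(y/b^3) Y = 1, whose chord midpoint is known. *)
Lemma polar_secant_abscissa_sum (z p w : pt) :
  on_ellipse a b p -> on_ellipse a b z -> on_ellipse a b w -> z <> w ->
  caustic_pair a b z p -> caustic_pair a b p w ->
  fst z + fst w = nbr_abscissa_sum a b p.
Proof.
  destruct p as [x y], z as [zx zy], w as [wx wy].
  unfold on_ellipse, caustic_pair, nbr_abscissa_sum; cbn [fst snd].
  intros E Ez Ew Hzw Bz Bw.
  pose proof (ellipse_normal_sq_pos a b Ha Hb x y E) as HD.
  set (n1 := (a-b)*x/a^3). set (n2 := -(a-b)*y/b^3).
  assert (Lz : n1*zx + n2*zy = 1).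
  { transitivity ((a-b)*(zx*x/a^3 - zy*y/b^3)); [unfold n1, n2; field; lra|].
    rewrite Bz. field. lra. }
  assert (Lw : n1*wx + n2*wy = 1).
  { transitivity ((a-b)*(x*wx/a^3 - y*wy/b^3)); [unfold n1, n2; field; lra|].
    rewrite Bw. field. lra. }
  destruct (secant_midpoint a b Ha Hb n1 n2 zx zy wx wy Ez Ew Hzw Lz Lw) as [M _].
  replace (a^2*n1^2 + b^2*n2^2) with ((a-b)^2 * (x^2/a^4 + y^2/b^4)) in M
    by (unfold n1, n2; field; lra).
  set (Q := x^2/a^4 + y^2/b^4) in *.
  assert (0 < (a-b)^2) by (apply pow_lt; lra).
  apply (Rmult_eq_reg_r ((a-b)^2 * Q)); [|nra].
  rewrite M. unfold n1. field. lra.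
Qed.

(* The equation satisfied by t = x^2/a^2 at the foot of a normal caustic chord:
   its roots are t0 = a^3(a-2b)/((a-b)^2(a^2-b^2)) and a^2/(a^2-b^2) > 1. *)
Lemma normal_caustic_quadratic (t : R) : t <= 1 ->
  2*(t/a^2 + (1-t)/b^2)*(t/a^3 - (1-t)/b^3)
    + (1/(a-b) - (t/a - (1-t)/b))*(t/a^4 + (1-t)/b^4) = 0 ->
  t = a^3*(a-2*b)/((a-b)^2*(a^2-b^2)).
Proof.
  intros Ht Hq.
  assert (Hab2 : 0 < a^2 - b^2) by nra.
  replace (2*(t/a^2 + (1-t)/b^2)*(t/a^3 - (1-t)/b^3)
           + (1/(a-b) - (t/a - (1-t)/b))*(t/a^4 + (1-t)/b^4))
    with ((1/a^2-1/b^2)*(1/a+1/b)*(1/a-1/b)^2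
          * (t - a^3*(a-2*b)/((a-b)^2*(a^2-b^2))) * (t - a^2/(a^2-b^2))) in Hq
    by (field; repeat split; lra).
  assert (HK : (1/a^2-1/b^2)*(1/a+1/b)*(1/a-1/b)^2 <> 0).
  { assert (Hab' : / a < / b) by (apply Rinv_lt_contravar; nra).
    assert (0 < / a) by (apply Rinv_0_lt_compat; lra).
    replace ((1/a^2-1/b^2)*(1/a+1/b)*(1/a-1/b)^2)
      with (((/a)^2 - (/b)^2) * (/a + /b) * (/a - /b)^2) by (field; lra).
    repeat apply Rmult_integral_contrapositive_currified; nra. }
  assert (Ht1 : t - a^2/(a^2-b^2) <> 0).
  { replace (t - a^2/(a^2-b^2)) with (((t-1)*(a^2-b^2) - b^2) / (a^2-b^2)) by (field; lra).
    assert (0 < b^2) by (apply pow_lt; lra).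
    assert ((t-1)*(a^2-b^2) <= 0) by nra.
    apply Rmult_integral_contrapositive_currified; [apply Rlt_not_eq; lra|].
    apply Rinv_neq_0_compat. lra. }
  destruct (Rmult_integral _ _ Hq) as [Hq' | Hq']; [|contradiction].
  destruct (Rmult_integral _ _ Hq') as [Hq'' | Hq'']; [contradiction | lra].
Qed.

Lemma normal_caustic_foot (x y s : R) :
  x^2/a^2 + y^2/b^2 = 1 ->
  2*(x^2/a^4 + y^2/b^4) + s*(x^2/a^6 + y^2/b^6) = 0 ->
  x*(x*(1 + s/a^2))/a^3 - y*(y*(1 + s/b^2))/b^3 = 1/(a-b) ->
  x^2/a^2 = a^3*(a-2*b)/((a-b)^2*(a^2-b^2)).
Proof.
  intros E HN HC.
  set (t := x^2/a^2) in *.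
  assert (Hx2 : x^2 = a^2*t) by (unfold t; field; lra).
  assert (Hy2 : y^2 = b^2*(1-t)) by (rewrite <- E; field; lra).
  assert (Ht : t <= 1) by (assert (0 < b^2) by (apply pow_lt; lra); pose proof (pow2_ge_0 y); nra).
  assert (HN' : 2*(t/a^2 + (1-t)/b^2) + s*(t/a^4 + (1-t)/b^4) = 0).
  { rewrite <- HN, Hx2, Hy2. field. lra. }
  assert (HC' : s*(t/a^3 - (1-t)/b^3) = 1/(a-b) - (t/a - (1-t)/b)).
  { rewrite <- HC. transitivity (x^2*(1 + s/a^2)/a^3 - y^2*(1 + s/b^2)/b^3 - (t/a - (1-t)/b)).
    - rewrite Hx2, Hy2. field. lra.
    - field. lra. }
  apply normal_caustic_quadratic; [assumption|].
  rewrite <- HC'.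
  transitivity ((t/a^3 - (1-t)/b^3) * (2*(t/a^2 + (1-t)/b^2) + s*(t/a^4 + (1-t)/b^4)));
    [field; lra | rewrite HN'; ring].
Qed.

Lemma normal_caustic_abscissa (x y wx wy : R) :
  x^2/a^2 + y^2/b^2 = 1 -> wx^2/a^2 + wy^2/b^2 = 1 -> (x, y) <> (wx, wy) ->
  (wx-x)*(y/b^2) - (wy-y)*(x/a^2) = 0 ->
  caustic_pair a b (x, y) (wx, wy) ->
  wx + wx = nbr_abscissa_sum a b (x, y).
Proof.
  intros E Ew Hne Hc HB. unfold caustic_pair, nbr_abscissa_sum in *; cbn [fst snd] in *.
  destruct (normal_chord a b Ha Hb x y wx wy E Ew Hne Hc) as [s [Hs [Hwx [Hwy HN]]]].
  rewrite Hwx, Hwy in HB. rewrite Hwx.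
  pose proof (normal_caustic_foot x y s E HN HB) as Ht.
  pose proof (ellipse_normal_sq_pos a b Ha Hb x y E) as HD.
  set (t0 := a^3*(a-2*b)/((a-b)^2*(a^2-b^2))) in Ht.
  assert (Hx2 : x^2 = a^2*t0) by (rewrite <- Ht; field; lra).
  assert (Hy2 : y^2 = b^2*(1-t0)) by (rewrite <- E, <- Ht; field; lra).
  set (D := x^2/a^4 + y^2/b^4) in *. set (D3 := x^2/a^6 + y^2/b^6) in *.
  assert (HD3 : D3 <> 0) by (intros Z; rewrite Z in HN; lra).
  (* at the abscissa t0, the normal chord parameter s = -2D/D3 satisfies: *)
  assert (Hpoly : (D3 - 2*D/a^2)*((a-b)*a*D) - D3 = 0).
  { assert (a^2 - b^2 <> 0) by nra.
    unfold D, D3. rewrite Hx2, Hy2. unfold t0. field. repeat split; lra. }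
  assert (Key : (1 + s/a^2) * ((a-b)*a*D) = 1).
  { apply (Rmult_eq_reg_l D3); [|assumption].
    transitivity ((D3 + (s*D3)/a^2)*((a-b)*a*D)); [field; lra|].
    replace (s*D3) with (-(2*D)) by lra.
    transitivity ((D3 - 2*D/a^2)*((a-b)*a*D)); [field; lra | lra]. }
  apply (Rmult_eq_reg_r ((a-b)*a*D)); [|apply Rgt_not_eq; apply Rmult_lt_0_compat; nra].
  transitivity (2*x*((1 + s/a^2)*((a-b)*a*D))); [field; lra|].
  rewrite Key. field. repeat split; lra.
Qed.

Lemma neighbour_abscissa_sum (z p w : pt) :
  on_ellipse a b z -> on_ellipse a b p -> on_ellipse a b w -> z <> p -> p <> w ->
  caustic_pair a b z p -> caustic_pair a b p w -> bisects a b z p w ->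
  fst z + fst w = nbr_abscissa_sum a b p.
Proof.
  intros Ez Ep Ew Hz Hw Bz Bw Hr.
  destruct z as [zx zy], w as [wx wy].
  destruct (Req_dec zx wx) as [<-|Hx]; [destruct (Req_dec zy wy) as [<-|Hy]|].
  - destruct p as [x y]. unfold on_ellipse in *; cbn [fst snd] in *.
    apply (normal_caustic_abscissa x y zx zy Ep Ew Hw); [|exact Bw].
    exact (bisects_degenerate a b Ha Hb x y zx zy Hw Hr).
  - apply polar_secant_abscissa_sum; try assumption. congruence.
  - apply polar_secant_abscissa_sum; try assumption. congruence.
Qed.

Lemma edge_identity (p q : pt) :
  on_ellipse a b p -> on_ellipse a b q -> caustic_pair a b p q ->
  fst p * nbr_abscissa_sum a b p + fst q * nbr_abscissa_sum a b q - fst p * fst q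
    = a^3 * (a - 2*b) / (a - b)^2.
Proof.
  destruct p as [x y], q as [x' y'].
  unfold on_ellipse, caustic_pair, nbr_abscissa_sum; cbn [fst snd]. intros E1 E2 HB.
  pose proof (ellipse_normal_sq_pos a b Ha Hb x y E1) as Q1p.
  pose proof (ellipse_normal_sq_pos a b Ha Hb x' y' E2) as Q2p.
  assert (Hy : y^2 = b^2*(1 - x^2/a^2)) by (rewrite <- E1; field; lra).
  assert (Hy' : y'^2 = b^2*(1 - x'^2/a^2)) by (rewrite <- E2; field; lra).
  assert (Hz : y*y' = b^3*(x*x'/a^3 - 1/(a-b))) by (rewrite <- HB; field; lra).
  assert (Hs : x^2 + x'^2 = a^2*(1 + (x*x')^2/a^4 - (y*y')^2/b^4)).
  { replace ((y*y')^2) with (y^2*y'^2) by ring. rewrite Hy, Hy'. field; lra. }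
  rewrite Hz in Hs.
  (* on the ellipse, x^2/a^4 + y^2/b^4 is affine in x^2 *)
  set (d0 := 1/b^2). set (d1 := 1/a^4 - 1/(a^2*b^2)).
  assert (HQ1 : x^2/a^4 + y^2/b^4 = d0 + d1*x^2) by (rewrite Hy; unfold d0, d1; field; lra).
  assert (HQ2 : x'^2/a^4 + y'^2/b^4 = d0 + d1*x'^2) by (rewrite Hy'; unfold d0, d1; field; lra).
  rewrite HQ1, HQ2 in *.
  apply (Rmult_eq_reg_r ((d0 + d1*x^2)*(d0 + d1*x'^2))); [|apply Rgt_not_eq, Rmult_lt_0_compat; lra].
  replace ((d0 + d1*x^2)*(d0 + d1*x'^2))
    with (d0^2 + d0*d1*(x^2 + x'^2) + d1^2*(x*x')^2) by ring.
  transitivity (2*(d0*(x^2 + x'^2) + 2*d1*(x*x')^2)/((a-b)*a)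
                - (x*x')*(d0^2 + d0*d1*(x^2 + x'^2) + d1^2*(x*x')^2)).
  { field. repeat split; lra. }
  rewrite Hs. unfold d0, d1. field. lra.
Qed.
End Caustic.

Lemma vtx_mod (P : nat -> pt) (i k : nat) : vtx P (i + k) = vtx P (i mod 6 + k).
Proof. unfold vtx. now rewrite Nat.Div0.add_mod_idemp_l. Qed.

Lemma vtx_add6 (P : nat -> pt) (i : nat) : vtx P (i + 6) = vtx P i.
Proof.
  unfold vtx. replace (i + 6)%nat with (i + 1 * 6)%nat by lia.
  now rewrite Nat.Div0.mod_add.
Qed.

Lemma cyclic_edges (P : nat -> pt) (F : pt -> pt -> Prop) :
  (forall i, (i < 6)%nat -> F (vtx P i) (vtx P (i + 1))) ->
  forall i, F (vtx P i) (vtx P (i + 1)).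
Proof.
  intros H i. rewrite (vtx_mod P i 1).
  replace (vtx P i) with (vtx P (i mod 6)) by (unfold vtx; now rewrite Nat.Div0.mod_mod).
  apply H, Nat.mod_upper_bound. lia.
Qed.

Lemma hexagon_cyclic_sum (X F : nat -> R) (A : R) :
  (forall i, X (i + 6)%nat = X i) -> F 6%nat = F 0%nat ->
  (forall i, (i < 6)%nat -> X (i + 5)%nat + X (i + 1)%nat = F i) ->
  (forall i, (i < 6)%nat -> X i * F i + X (i + 1)%nat * F (i + 1)%nat - X i * X (i + 1)%nat = A) ->
  sum_f_R0 (fun i => X i * X (i + 1)%nat) 5 = 2 * A.
Proof.
  intros HX HF HV HW.
  pose proof (HV 0%nat ltac:(lia)) as V0. pose proof (HV 1%nat ltac:(lia)) as V1.
  pose proof (HV 2%nat ltac:(lia)) as V2. pose proof (HV 3%nat ltac:(lia)) as V3.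
  pose proof (HV 4%nat ltac:(lia)) as V4. pose proof (HV 5%nat ltac:(lia)) as V5.
  pose proof (HW 0%nat ltac:(lia)) as W0. pose proof (HW 1%nat ltac:(lia)) as W1.
  pose proof (HW 2%nat ltac:(lia)) as W2. pose proof (HW 3%nat ltac:(lia)) as W3.
  pose proof (HW 4%nat ltac:(lia)) as W4. pose proof (HW 5%nat ltac:(lia)) as W5.
  pose proof (HX 0%nat) as X6. pose proof (HX 1%nat) as X7. pose proof (HX 2%nat) as X8.
  pose proof (HX 3%nat) as X9. pose proof (HX 4%nat) as X10.
  simpl in *. rewrite X6, X7, X8, X9, X10 in *. rewrite HF in W5.
  rewrite <- V0, <- V1, <- V2, <- V3, <- V4, <- V5 in *.
  lra.
Qed.

Lemma sum_affine (k m : R) (f : nat -> R) (n : nat) :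
  sum_f_R0 (fun i => k + m * f i) n = k * INR (S n) + m * sum_f_R0 f n.
Proof.
  rewrite sum_plus, sum_cte, scal_sum. f_equal.
  apply sum_eq. intros. ring.
Qed.

Section TypeITrajectory.
Variables (a b : R) (P : nat -> pt).
Hypotheses (Hb : 0 < b) (Hab : 2 * b < a) (HP : typeI_6periodic a b P).

Lemma typeI_on_ellipse (i : nat) : on_ellipse a b (vtx P i).
Proof.
  destruct HP as [[Hell _] _]. apply Hell, Nat.mod_upper_bound. lia.
Qed.

Lemma typeI_edge (i : nat) :
  vtx P i <> vtx P (i + 1) /\ caustic_pair a b (vtx P i) (vtx P (i + 1)).
Proof.
  revert i. apply (cyclic_edges P (fun p q => p <> q /\ caustic_pair a b p q)).
  intros i Hi. destruct HP as [[_ [Hdist _]] Htan].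
  split; [now apply Hdist|].
  apply tangent_caustic_pair; auto using typeI_on_ellipse.
Qed.

Lemma typeI_prev_edge (i : nat) :
  vtx P (i + 5) <> vtx P i /\ caustic_pair a b (vtx P (i + 5)) (vtx P i).
Proof.
  rewrite <- (vtx_add6 P i). replace (i + 6)%nat with (i + 5 + 1)%nat by lia.
  apply typeI_edge.
Qed.

Lemma typeI_abscissa_products :
  sum_f_R0 (fun i => fst (vtx P i) * fst (vtx P (i + 1))) 5
    = 2 * (a^3 * (a - 2*b) / (a - b)^2).
Proof.
  apply (hexagon_cyclic_sum (fun i => fst (vtx P i)) (fun i => nbr_abscissa_sum a b (vtx P i))).
  - intros i. now rewrite vtx_add6.
  - reflexivity.
  - intros i Hi. destruct HP as [[_ [_ Hrefl]] _].
    destruct (typeI_prev_edge i) as [Hz Bz]. destruct (typeI_edge i) as [Hw Bw].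
    apply neighbour_abscissa_sum; auto using typeI_on_ellipse.
    exact (Hrefl i Hi).
  - intros i _. apply edge_identity; auto using typeI_on_ellipse. apply typeI_edge.
Qed.

(* cos 2θ'_i = 2 c_i - 1 is affine in the product of the abscissae of P_i, P_{i+1}. *)
Lemma typeI_cos_sum :
  sum_f_R0 (fun i => cos (2 * outer_angle a b P i)) 5
    = 6 * (a / (a - b) - 1)
      - (a + b) / a^3 * sum_f_R0 (fun i => fst (vtx P i) * fst (vtx P (i + 1))) 5.
Proof.
  rewrite (sum_eq _ (fun i => (a/(a-b) - 1) + (- (a+b)/a^3) * (fst (vtx P i) * fst (vtx P (i + 1))))).
  - rewrite sum_affine. simpl INR. field. lra.
  - intros i _. unfold outer_angle.
    rewrite chord_tangent_angle; auto using typeI_on_ellipse; [|apply typeI_edge].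
    unfold chord_param. field. lra.
Qed.

(* Each side has length (a-b)(1 + cos 2θ'_i). *)
Lemma typeI_perimeter :
  perimeter6 P = (a - b) * (sum_f_R0 (fun i => cos (2 * outer_angle a b P i)) 5 + 6).
Proof.
  unfold perimeter6.
  rewrite (sum_eq _ (fun i => (a - b) + (a - b) * cos (2 * outer_angle a b P i))).
  - rewrite sum_affine. simpl INR. ring.
  - intros i _. destruct (typeI_edge i) as [Hne Hpair]. unfold outer_angle.
    destruct (chord_length a b Hb Hab _ _ (typeI_on_ellipse i) (typeI_on_ellipse (i + 1)) Hne Hpair)
      as [_ ->].
    rewrite chord_tangent_angle; auto using typeI_on_ellipse. ring.
Qed.

Lemma typeI_joachimsthal : joachimsthal a b P = 1 / (a - b).
Proof.
  destruct (typeI_edge 5) as [Hne Hpair].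
  exact (chord_joachimsthal a b Hb Hab _ _ (typeI_on_ellipse 5) (typeI_on_ellipse 6) Hne Hpair).
Qed.
End TypeITrajectory.

Theorem mainTheorem15 (a b : R) (P : nat -> pt) :
  0 < b -> 2 * b < a ->
  typeI_6periodic a b P ->
  sum_f_R0 (fun i => cos (2 * outer_angle a b P i)) 5
    = - (2 * (a^2 - 4 * a * b + b^2)) / (a - b)^2 /\
  sum_f_R0 (fun i => cos (2 * outer_angle a b P i)) 5
    = joachimsthal a b P * perimeter6 P - 6.
Proof.
  intros Hb Hab HP.
  rewrite (typeI_joachimsthal a b P Hb Hab HP), (typeI_perimeter a b P Hb Hab HP).
  split.
  - rewrite (typeI_cos_sum a b P Hb Hab HP), (typeI_abscissa_products a b P Hb Hab HP).
    field. lra.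
  - field. lra.
Qed.
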